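(* Let $L \ge N$, let $\mathbf{T} \in \mathbb{R}^{L\times N}$ have full rank $N$, and let $\gamma>0$. Define on $\mathbb{R}^N$ the norm $\|\mathbf{x}\|_{\mathbf{T}} := \|\mathbf{T}\mathbf{x}\|_2$. Then the operators $\mathbf{T}^{\dagger}S_\gamma\mathbf{T}$ and $\mathbf{I}-\mathbf{T}^{\dagger}S_\gamma\mathbf{T}$ are firmly non-expansive with respect to $\|\cdot\|_{\mathbf{T}}$, i.e., for all $\mathbf{x},\mathbf{y}\in\mathbb{R}^N$, $$\|\mathbf{T}^{\dagger}S_\gamma\mathbf{T}\mathbf{x} - \mathbf{T}^{\dagger}S_\gamma\mathbf{T}\mathbf{y}\|_{\mathbf{T}}^2 + \|(\mathbf{I}-\mathbf{T}^{\dagger}S_\gamma\mathbf{T})\mathbf{x} - (\mathbf{I}-\mathbf{T}^{\dagger}S_\gamma\mathbf{T})\mathbf{y}\|_{\mathbf{T}}^2 \le \|\mathbf{x}-\mathbf{y}\|_{\mathbf{T}}^2.$$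
   Context: $\mathbf{T}^*$ is the transpose, $\mathbf{T}^{\dagger}=(\mathbf{T}^*\mathbf{T})^{-1}\mathbf{T}^*$ the Moore–Penrose inverse, $\mathbf{I}$ the $N\times N$ identity, $\|\cdot\|_2$ the Euclidean norm on $\mathbb{R}^L$. $S_\gamma:\mathbb{R}^L\to\mathbb{R}^L$ is componentwise soft shrinkage: $[S_\gamma(\mathbf{y})]_j = y_j-\gamma$ if $y_j\ge\gamma$, $y_j+\gamma$ if $y_j\le-\gamma$, $0$ if $|y_j|<\gamma$. *)

From HB Require Import structures.
From mathcomp Require Import all_boot all_order all_algebra.
From mathcomp Require Import reals.
Set Implicit Arguments. Unset Strict Implicit. Unset Printing Implicit Defensive.
Import Order.TTheory GRing.Theory Num.Theory.
Local Open Scope ring_scope.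

Definition norm2 {R : realType} {L : nat} (v : 'cV[R]_L) : R :=
  Num.sqrt (\sum_(j < L) (v j 0) ^+ 2).

Definition normT {R : realType} {L N : nat} (T : 'M[R]_(L, N)) (x : 'cV[R]_N) : R :=
  norm2 (T *m x).

(* Moore-Penrose inverse (T^* T)^{-1} T^* for a full column rank T. *)
Definition pinv {R : realType} {L N : nat} (T : 'M[R]_(L, N)) : 'M[R]_(N, L) :=
  invmx (T^T *m T) *m T^T.

Definition soft_scalar {R : realType} (g t : R) : R :=
  if g <= t then t - g else if t <= - g then t + g else 0.

Definition soft {R : realType} {L : nat} (g : R) (y : 'cV[R]_L) : 'cV[R]_L :=
  \col_j soft_scalar g (y j 0).

Definition TST {R : realType} {L N : nat} (T : 'M[R]_(L, N)) (g : R)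
  (x : 'cV[R]_N) : 'cV[R]_N :=
  pinv T *m soft g (T *m x).

From HB Require Import structures.
From mathcomp Require Import all_boot all_order all_algebra.
From mathcomp Require Import reals.
From mathcomp Require Import ring lra.
Import Order.TTheory GRing.Theory Num.Theory.
Local Open Scope ring_scope.
Set Implicit Arguments. Unset Strict Implicit. Unset Printing Implicit Defensive.

(* Since T has full column rank, ||.||_T is the Euclidean norm transported to
   range T, and T T^dagger is the orthogonal projection P onto range T; the
   claim becomes ||P e||^2 + ||d - P e||^2 <= ||d||^2 for d = T x - T y and
   e = S_g (T x) - S_g (T y).  As P d = d, expanding gives <P e, e> <= <d, e>, which
   follows from ||P e||^2 <= ||e||^2 and the firm non-expansiveness
   ||e||^2 <= <d, e> of soft shrinkage, checked coordinatewise. *)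

Section InnerProduct.
Variable R : realDomainType.

Definition vdot n (u w : 'cV[R]_n) : R := (u^T *m w) 0 0.

Lemma vdotE n (u w : 'cV[R]_n) : vdot u w = \sum_j u j 0 * w j 0.
Proof. by rewrite /vdot mxE; apply: eq_bigr => j _; rewrite mxE. Qed.

Lemma vdotC n (u w : 'cV[R]_n) : vdot u w = vdot w u.
Proof. by rewrite !vdotE; apply: eq_bigr => j _; rewrite mulrC. Qed.

Lemma vdotBl n (u v w : 'cV[R]_n) : vdot (u - v) w = vdot u w - vdot v w.
Proof. by rewrite !vdotE -sumrB; apply: eq_bigr => j _; rewrite !mxE mulrBl. Qed.

Lemma vdotBr n (u v w : 'cV[R]_n) : vdot w (u - v) = vdot w u - vdot w v.
Proof. by rewrite !(vdotC w) vdotBl. Qed.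

Lemma vdot_mull m n (A : 'M[R]_(m, n)) u w : vdot (A *m u) w = vdot u (A^T *m w).
Proof. by rewrite /vdot trmx_mul mulmxA. Qed.

Lemma vdot_ge0 n (u : 'cV[R]_n) : 0 <= vdot u u.
Proof. by rewrite vdotE; apply: sumr_ge0 => j _; rewrite -expr2 sqr_ge0. Qed.

Lemma vdot_eq0 n (u : 'cV[R]_n) : (vdot u u == 0) = (u == 0).
Proof.
apply/idP/eqP => [|->]; last by rewrite vdotE big1 // => j _; rewrite mxE mul0r.
rewrite vdotE psumr_eq0 => [/allP u0|j _]; last by rewrite -expr2 sqr_ge0.
apply/matrixP => i j; rewrite ord1 mxE.
by apply/eqP; rewrite -[_ == 0]orbb -mulf_eq0; apply: u0 (mem_index_enum _).
Qed.

Lemma vdot_subr n (u v : 'cV[R]_n) :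
  vdot (u - v) (u - v) = vdot u u - vdot u v *+ 2 + vdot v v.
Proof. by rewrite !vdotBl !vdotBr (vdotC v u); ring. Qed.

End InnerProduct.

Lemma norm2_sqr (R : realType) n (u : 'cV[R]_n) : norm2 u ^+ 2 = vdot u u.
Proof.
rewrite /norm2 sqr_sqrtr; last by apply: sumr_ge0 => j _; rewrite sqr_ge0.
by rewrite vdotE; apply: eq_bigr => j _; rewrite expr2.
Qed.

Section OrthogonalProjection.
Variables (R : realDomainType) (n : nat) (P : 'M[R]_n).
Hypotheses (P_sym : P^T = P) (P_idem : P *m P = P).

Lemma vdot_proj_sqr e : vdot (P *m e) (P *m e) = vdot e (P *m e).
Proof. by rewrite vdot_mull P_sym mulmxA P_idem. Qed.

Lemma vdot_proj_le e : vdot (P *m e) (P *m e) <= vdot e e.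
Proof.
have := vdot_ge0 (e - P *m e).
by rewrite vdot_subr vdot_proj_sqr; lra.
Qed.

Lemma vdot_proj_fixed d e : P *m d = d -> vdot d (P *m e) = vdot d e.
Proof. by move=> Pd; rewrite vdotC vdot_mull P_sym Pd vdotC. Qed.

Lemma proj_firmly_nonexpansive d e : P *m d = d -> vdot e e <= vdot d e ->
  vdot (P *m e) (P *m e) + vdot (d - P *m e) (d - P *m e) <= vdot d d.
Proof.
move=> Pd de; have := vdot_proj_le e.
by rewrite vdot_subr (vdot_proj_fixed _ Pd) vdot_proj_sqr (vdotC e); lra.
Qed.

End OrthogonalProjection.

Lemma soft_scalar_firmly_nonexpansive (R : realType) (g s t : R) : 0 <= g ->
  (soft_scalar g s - soft_scalar g t) ^+ 2
    <= (s - t) * (soft_scalar g s - soft_scalar g t).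
Proof.
move=> g0; rewrite /soft_scalar.
by case: (lerP g s); case: (lerP s (- g)); case: (lerP g t); case: (lerP t (- g)); nra.
Qed.

Lemma soft_firmly_nonexpansive (R : realType) L (g : R) (u v : 'cV[R]_L) : 0 <= g ->
  vdot (soft g u - soft g v) (soft g u - soft g v)
    <= vdot (u - v) (soft g u - soft g v).
Proof.
move=> g0; rewrite !vdotE; apply: ler_sum => j _.
by rewrite !mxE -expr2; apply: soft_scalar_firmly_nonexpansive.
Qed.

Lemma subrACA (V : zmodType) (a b c d : V) : a - b - (c - d) = a - c - (b - d).
Proof. by rewrite !opprB addrACA [RHS]addrACA (addrC (- c)). Qed.

Section RangeProjection.
Variables (R : realType) (L N : nat) (T : 'M[R]_(L, N)).
Hypothesis T_full : \rank T = N.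

Lemma mulmx_full_eq0 (v : 'cV[R]_N) : (T *m v == 0) = (v == 0).
Proof.
rewrite -trmx_eq0 trmx_mul mulmx_free_eq0 ?trmx_eq0 //.
by rewrite /row_free mxrank_tr T_full.
Qed.

Lemma gram_unitmx : T^T *m T \in unitmx.
Proof.
rewrite -row_free_unit; apply/inj_row_free => v vG0.
have G_sym : (T^T *m T)^T = T^T *m T by rewrite trmx_mul trmxK.
have GvT0 : T^T *m (T *m v^T) = 0 by rewrite mulmxA -G_sym -trmx_mul vG0 trmx0.
have TvT0 : T *m v^T = 0.
  by apply/eqP; rewrite -vdot_eq0 vdot_mull GvT0 /vdot mulmx0 mxE.
by apply/eqP; rewrite -trmx_eq0 -mulmx_full_eq0 TvT0.
Qed.

Lemma pinv_mulmx : pinv T *m T = 1%:M.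
Proof. by rewrite /pinv -mulmxA mulVmx // gram_unitmx. Qed.

Lemma range_proj_sym : (T *m pinv T)^T = T *m pinv T.
Proof. by rewrite /pinv !trmx_mul trmxK trmx_inv trmx_mul trmxK mulmxA. Qed.

Lemma range_proj_mulmx : T *m pinv T *m T = T.
Proof. by rewrite -mulmxA pinv_mulmx mulmx1. Qed.

Lemma range_proj_idem : T *m pinv T *m (T *m pinv T) = T *m pinv T.
Proof. by rewrite mulmxA range_proj_mulmx. Qed.

End RangeProjection.

Theorem proposition2p3 (R : realType) (L N : nat) (T : 'M[R]_(L, N)) (g : R)
  (hLN : (N <= L)%N) (hrank : \rank T = N) (hg : 0 < g) :
  forall x y : 'cV[R]_N,
    (normT T (TST T g x - TST T g y)) ^+ 2
    + (normT T ((x - TST T g x) - (y - TST T g y))) ^+ 2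
    <= (normT T (x - y)) ^+ 2.
Proof.
move=> x y; set P := T *m pinv T.
have T_TST z : T *m TST T g z = P *m soft g (T *m z) by rewrite /TST mulmxA.
rewrite subrACA /normT !norm2_sqr !mulmxBr !T_TST -!mulmxBr.
apply: proj_firmly_nonexpansive.
- by rewrite /P range_proj_sym.
- by rewrite /P range_proj_idem.
- by rewrite mulmxA range_proj_mulmx.
- by rewrite mulmxBr; apply/soft_firmly_nonexpansive/ltW.
Qed.
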